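(* In any execution of $\mathcal{U}$, suppose operation $o$ is complete, and let the unique execution of line 12 for $o$ that returned true be GCAS$(=, S, -, (t(o), s, r, h(o)))$. Then the response returned by DoOp$(o)$ at line 14 is $r$.
   Context: Model: an asynchronous shared-memory system with possibly infinitely many processes, any of which may crash, communicating via atomic shared objects. A fetch-and-increment (F\&I) object stores an integer; F\&I$(C)$ atomically returns the current value and increments it. A generalized-compare-and-swap (GCAS) object $O$ stores a value and supports Read$(O)$ and GCAS$(c, O, v_1, v_2)$, which atomically does: if $c(\text{current value of } O, v_1)$ holds then set $O := v_2$ and return true, else return false. Tuples are compared componentwise for $=$; GCAS$(>, A, (t,-,-), v)$ succeeds iff the time field of $A$ is strictly greater than $t$. Implemented type $\mathcal{T} = (OP, RES, Q, \delta)$ with initial state $s_0$; a procedure $apply_{\mathcal{T}}(o,s)$ returns some $(s',r)$ with $(s,o,s',r)\in\delta$. $NULL$ is a value different from every response of $\mathcal{T}$, and $NOOP$ is a name different from every operation of $\mathcal{T}$. Algorithm $\mathcal{U}$: each process $p$ owns a GCAS object $H_p$ with fields $(time, response)$. Shared objects: F\&I object $C$, initially $1$; GCAS object $A$ with fields $(time, op, ptr)$, initially $(0, NOOP, h(NOOP))$, where $h(NOOP)$ is a pointer to an immutable location containing $(0,\perp)$; GCAS object $S$ with fields $(time, state, response, ptr)$, initially $(0, s_0, \perp, h(NOOP))$. Process $p$ performs operation $o$ by calling DoOp$(o)$: (1) DoOp$(o)$ invoked; (2) $t := $ F\&I$(C)$; (3) $H_p := (t, NULL)$; (4) while $H_p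 = (t, NULL)$ do: (5) $(t^*, s^*, r^*, roptr^* ) := S$; (6) GCAS$(=, *roptr^*, (t^*, NULL), (t^*, r^* ))$; (7) GCAS$(>, A, (t,-,-), (t, o, \&H_p))$; (8) $(t', o', roptr') := A$; (9) $(\hat t, \hat r) := *roptr'$; (10) if $(\hat t,\hat r) = (t', NULL)$ then (11) $(s', r') := apply_{\mathcal{T}}(o', s^* )$; (12) GCAS$(=, S, (t^*,s^*,r^*,roptr^* ), (t', s', r', roptr'))$; (13) else GCAS$(=, A, (t', o', roptr'), (t, o, \&H_p))$; end while; (14) return $H_p.response$. Notation: an ''operation'' $o$ means one invocation of DoOp$(o)$. $p(o)$ is the process executing it; $t(o)$ is the value returned by its F\&I at line 2; $h(o)$ is $H_{p(o)}$. Operation $o$ is complete if $p(o)$ executed line 14 in DoOp$(o)$. ''Line 12 is executed for $o$'' means the new value written in that GCAS has the form $(t(o), -, r, h(o))$; for a complete operation there is exactly one such execution that returns true. *)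

(* Processes are identified by natural numbers (infinitely
   many potential processes); a crash is simply a process that stops taking
   steps, which the arbitrary interleaving already allows. *)
From Stdlib Require Import List PeanoNat.
Import ListNotations.

Set Implicit Arguments.

(* Pointers stored in the ptr fields: h(NOOP) or &H_q. *)
Inductive Ptr := HNoop | HPtr (q : nat).

Inductive Resp (Res : Type) := RNull | RBot | RVal (r : Res).
Arguments RNull {Res}.
Arguments RBot {Res}.

Section Semantics.
Context (Op Res St : Type).

(* Program counter together with the local variables of DoOp(o).
   Lk = "about to execute line k". *)
Inductive Loc :=
| Idle
| L2 (o : Op)
| L3 (o : Op) (t : nat)
| L4 (o : Op) (t : nat)
| L5 (o : Op) (t : nat)
| L6 (o : Op) (t ts : nat) (ss : St) (rs : Resp Res) (ps : Ptr)
| L7 (o : Op) (t ts : nat) (ss : St) (rs : Resp Res) (ps : Ptr)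
| L8 (o : Op) (t ts : nat) (ss : St) (rs : Resp Res) (ps : Ptr)
| L9 (o : Op) (t ts : nat) (ss : St) (rs : Resp Res) (ps : Ptr)
     (t' : nat) (o' : option Op) (p' : Ptr)
| L10 (o : Op) (t ts : nat) (ss : St) (rs : Resp Res) (ps : Ptr)
     (t' : nat) (o' : option Op) (p' : Ptr) (th : nat) (rh : Resp Res)
| L11 (o : Op) (t ts : nat) (ss : St) (rs : Resp Res) (ps : Ptr)
     (t' : nat) (o' : option Op) (p' : Ptr)
| L12 (o : Op) (t ts : nat) (ss : St) (rs : Resp Res) (ps : Ptr)
     (t' : nat) (o' : option Op) (p' : Ptr) (s' : St) (r' : Res)
| L13 (o : Op) (t : nat) (t' : nat) (o' : option Op) (p' : Ptr)
| L14 (o : Op) (t : nat).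

(* Global configuration.  The op field of A uses None for NOOP. *)
Record Conf := mkConf {
  cC : nat;
  cA : nat * option Op * Ptr;
  cS : nat * St * Resp Res * Ptr;
  cH : nat -> nat * Resp Res;
  cLoc : nat -> Loc }.

Inductive Ev :=
| EvInv (p : nat) (o : Op)                       (* line 1: DoOp(o) invoked *)
| EvFAI (p : nat) (t : nat)                      (* line 2: F&I returned t *)
| EvL12 (p : nat) (newv : nat * St * Resp Res * Ptr) (ok : bool)
                                                 (* line 12: GCAS on S with new value newv, result ok *)
| EvRet (p : nat) (v : Resp Res)                 (* line 14: returned v *)
| EvLocal (p : nat).                             (* any other line *)

Definition upd {X : Type} (f : nat -> X) (p : nat) (x : X) : nat -> X :=
  fun q => if Nat.eq_dec q p then x else f q.

(* *h(NOOP) is the immutable location (0, bottom). *)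
Definition deref (c : Conf) (ptr : Ptr) : nat * Resp Res :=
  match ptr with HNoop => (0, RBot) | HPtr q => cH c q end.

Definition setC c x := mkConf x (cA c) (cS c) (cH c) (cLoc c).
Definition setA c x := mkConf (cC c) x (cS c) (cH c) (cLoc c).
Definition setS c x := mkConf (cC c) (cA c) x (cH c) (cLoc c).
Definition setH c x := mkConf (cC c) (cA c) (cS c) x (cLoc c).
Definition setL c p l := mkConf (cC c) (cA c) (cS c) (cH c) (upd (cLoc c) p l).

Context (applyT : Op -> St -> St -> Res -> Prop).
(* applyT o s s' r : "apply_T(o,s) may return (s',r)" *)

Inductive step : Conf -> Ev -> Conf -> Prop :=
| st1 c p o : cLoc c p = Idle ->
    step c (EvInv p o) (setL c p (L2 o))
| st2 c p o : cLoc c p = L2 o ->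
    step c (EvFAI p (cC c)) (setL (setC c (S (cC c))) p (L3 o (cC c)))
| st3 c p o t : cLoc c p = L3 o t ->
    step c (EvLocal p) (setL (setH c (upd (cH c) p (t, RNull))) p (L4 o t))
| st4_loop c p o t : cLoc c p = L4 o t -> cH c p = (t, RNull) ->
    step c (EvLocal p) (setL c p (L5 o t))
| st4_exit c p o t : cLoc c p = L4 o t -> cH c p <> (t, RNull) ->
    step c (EvLocal p) (setL c p (L14 o t))
| st5 c p o t ts ss rs ps : cLoc c p = L5 o t -> cS c = (ts, ss, rs, ps) ->
    step c (EvLocal p) (setL c p (L6 o t ts ss rs ps))
| st6_ok c p o t ts ss rs q : cLoc c p = L6 o t ts ss rs (HPtr q) ->
    cH c q = (ts, RNull) ->
    step c (EvLocal p)
      (setL (setH c (upd (cH c) q (ts, rs))) p (L7 o t ts ss rs (HPtr q)))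
| st6_fail c p o t ts ss rs ps : cLoc c p = L6 o t ts ss rs ps ->
    deref c ps <> (ts, RNull) ->
    step c (EvLocal p) (setL c p (L7 o t ts ss rs ps))
| st7_ok c p o t ts ss rs ps : cLoc c p = L7 o t ts ss rs ps ->
    fst (fst (cA c)) > t ->
    step c (EvLocal p)
      (setL (setA c (t, Some o, HPtr p)) p (L8 o t ts ss rs ps))
| st7_fail c p o t ts ss rs ps : cLoc c p = L7 o t ts ss rs ps ->
    ~ fst (fst (cA c)) > t ->
    step c (EvLocal p) (setL c p (L8 o t ts ss rs ps))
| st8 c p o t ts ss rs ps t' o' p' : cLoc c p = L8 o t ts ss rs ps ->
    cA c = (t', o', p') ->
    step c (EvLocal p) (setL c p (L9 o t ts ss rs ps t' o' p'))
| st9 c p o t ts ss rs ps t' o' p' th rh :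
    cLoc c p = L9 o t ts ss rs ps t' o' p' -> deref c p' = (th, rh) ->
    step c (EvLocal p) (setL c p (L10 o t ts ss rs ps t' o' p' th rh))
| st10_then c p o t ts ss rs ps t' o' p' th rh :
    cLoc c p = L10 o t ts ss rs ps t' o' p' th rh -> (th, rh) = (t', RNull) ->
    step c (EvLocal p) (setL c p (L11 o t ts ss rs ps t' o' p'))
| st10_else c p o t ts ss rs ps t' o' p' th rh :
    cLoc c p = L10 o t ts ss rs ps t' o' p' th rh -> (th, rh) <> (t', RNull) ->
    step c (EvLocal p) (setL c p (L13 o t t' o' p'))
| st11 c p o t ts ss rs ps t' oo p' s' r' :
    cLoc c p = L11 o t ts ss rs ps t' (Some oo) p' -> applyT oo ss s' r' ->
    step c (EvLocal p) (setL c p (L12 o t ts ss rs ps t' (Some oo) p' s' r'))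
| st12_ok c p o t ts ss rs ps t' o' p' s' r' :
    cLoc c p = L12 o t ts ss rs ps t' o' p' s' r' -> cS c = (ts, ss, rs, ps) ->
    step c (EvL12 p (t', s', RVal r', p') true)
      (setL (setS c (t', s', RVal r', p')) p (L4 o t))
| st12_fail c p o t ts ss rs ps t' o' p' s' r' :
    cLoc c p = L12 o t ts ss rs ps t' o' p' s' r' -> cS c <> (ts, ss, rs, ps) ->
    step c (EvL12 p (t', s', RVal r', p') false) (setL c p (L4 o t))
| st13_ok c p o t t' o' p' : cLoc c p = L13 o t t' o' p' ->
    cA c = (t', o', p') ->
    step c (EvLocal p) (setL (setA c (t, Some o, HPtr p)) p (L4 o t))
| st13_fail c p o t t' o' p' : cLoc c p = L13 o t t' o' p' ->
    cA c <> (t', o', p') ->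
    step c (EvLocal p) (setL c p (L4 o t))
| st14 c p o t : cLoc c p = L14 o t ->
    step c (EvRet p (snd (cH c p))) (setL c p Idle).

Inductive run : Conf -> list Ev -> Conf -> Prop :=
| run_nil c : run c [] c
| run_cons c e c' es c'' : step c e c' -> run c' es c'' -> run c (e :: es) c''.

(* Initial configuration: C = 1, A = (0, NOOP, h(NOOP)),
   S = (0, s0, bottom, h(NOOP)); H_p arbitrary (never read before written). *)
Definition init (s0 : St) (H0 : nat -> nat * Resp Res) : Conf :=
  mkConf 1 (0, None, HNoop) (0, s0, RBot, HNoop) H0 (fun _ => Idle).

End Semantics.

Arguments EvInv {Op Res St}.
Arguments EvFAI {Op Res St}.
Arguments EvL12 {Op Res St}.
Arguments EvRet {Op Res St}.
Arguments EvLocal {Op Res St}.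
Arguments init {Op Res St}.

(* The response returned at line 14 is the second component of H_p, which a line-6
   GCAS copied from a value (t, -, r, &H_p) of S, i.e. from a successful line-12
   GCAS for the operation with timestamp t.  It therefore suffices that the values
   written by successful line-12 GCASes are determined by their key (timestamp,
   pointer).  A process q succeeds at line 12 with key (t', p') only if S did not
   change since q read it at line 5, q executed line 6 on it, and q then saw
   *p' = (t', NULL) at line 9.  Had a value with that key been written before,
   either *p' would no longer be (t', NULL) -- its owner resets it only with
   larger timestamps -- or S would still hold that value, so q's own line 6
   would have filled *p'. *)

From Stdlib Require Import List PeanoNat Lia.
Import ListNotations.

Set Implicit Arguments.
Unset Strict Implicit.

Arguments Idle {Op Res St}.
Arguments L2 {Op Res St}.
Arguments L3 {Op Res St}.
Arguments L4 {Op Res St}.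
Arguments L5 {Op Res St}.
Arguments L13 {Op Res St}.
Arguments L14 {Op Res St}.

Lemma upd_same {X : Type} (f : nat -> X) p x : upd f p x p = x.
Proof. unfold upd; destruct (Nat.eq_dec p p); congruence. Qed.

Ltac case_upd :=
  unfold upd in *;
  repeat match goal with
  | H : context [Nat.eq_dec ?q ?p] |- _ => destruct (Nat.eq_dec q p); [subst q|]
  | |- context [Nat.eq_dec ?q ?p] => destruct (Nat.eq_dec q p); [subst q|]
  end.

Lemma In_nth_error_between {A : Type} (m1 m2 l : list A) x e :
  In e m2 -> exists n, length m1 < n <= length m1 + length m2 /\
    nth_error (m1 ++ x :: m2 ++ l) n = Some e.
Proof.
  intros Hin; destruct (In_nth_error _ _ Hin) as [k Hk].
  assert (k < length m2) by (apply nth_error_Some; congruence).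
  exists (length m1 + S k); split; [lia|].
  rewrite nth_error_app2 by lia.
  replace (length m1 + S k - length m1) with (S k) by lia; simpl.
  rewrite nth_error_app1 by lia; exact Hk.
Qed.

Section Invariant.
Context {Op Res St : Type}.

Local Notation conf := (Conf Op Res St).
Local Notation loc := (Loc Op Res St).
Local Notation sval := (nat * St * Resp Res * Ptr)%type.

Definition stime (Z : sval) : nat := fst (fst (fst Z)).
Definition sresp (Z : sval) : Resp Res := snd (fst Z).
Definition sptr (Z : sval) : Ptr := snd Z.
(* The key (t(o), h(o)) of a value of S names the operation it applies. *)
Definition skey (Z : sval) : nat * Ptr := (stime Z, sptr Z).
Arguments stime !Z /.
Arguments sresp !Z /.
Arguments sptr !Z /.
Arguments skey !Z /.

Definition ticket (l : loc) : option nat :=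
  match l with
  | Idle | L2 _ => None
  | L3 _ t | L4 _ t | L5 _ t | L13 _ t _ _ _ | L14 _ t
  | L6 _ t _ _ _ _ | L7 _ t _ _ _ _ | L8 _ t _ _ _ _
  | L9 _ t _ _ _ _ _ _ _ | L10 _ t _ _ _ _ _ _ _ _ _
  | L11 _ t _ _ _ _ _ _ _ | L12 _ t _ _ _ _ _ _ _ _ _ => Some t
  end.

(* The timestamp of the current operation once line 3 has set H_p := (t, NULL). *)
Definition registered (l : loc) : option nat :=
  match l with L3 _ _ => None | _ => ticket l end.

Definition read_S (l : loc) : option sval :=
  match l with
  | L6 _ _ ts ss rs ps | L7 _ _ ts ss rs ps | L8 _ _ ts ss rs ps
  | L9 _ _ ts ss rs ps _ _ _ | L10 _ _ ts ss rs ps _ _ _ _ _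
  | L11 _ _ ts ss rs ps _ _ _ | L12 _ _ ts ss rs ps _ _ _ _ _ => Some (ts, ss, rs, ps)
  | _ => None
  end.

(* The value read from S at line 5, once line 6 has been executed on it. *)
Definition helped_S (l : loc) : option sval :=
  match l with L6 _ _ _ _ _ _ => None | _ => read_S l end.

Definition read_A (l : loc) : option (nat * Ptr) :=
  match l with
  | L9 _ _ _ _ _ _ t' _ p' | L10 _ _ _ _ _ _ t' _ p' _ _
  | L11 _ _ _ _ _ _ t' _ p' | L12 _ _ _ _ _ _ t' _ p' _ _ | L13 _ _ t' _ p' => Some (t', p')
  | _ => None
  end.

Definition unwritten (W : list sval) (t : nat) (ptr : Ptr) : Prop :=
  forall w, In w W -> skey w <> (t, ptr).

(* While S still holds the value read at line 5, the operation read from A at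
   line 8 has not been applied yet; at L10 only if line 9 saw it pending. *)
Definition target_fresh (c : conf) (W : list sval) (l : loc) : Prop :=
  match l with
  | L10 _ _ ts ss rs ps t' _ p' th rh =>
      cS c = (ts, ss, rs, ps) -> (th, rh) = (t', RNull) -> unwritten W t' p'
  | L11 _ _ ts ss rs ps t' _ p' | L12 _ _ ts ss rs ps t' _ p' _ _ =>
      cS c = (ts, ss, rs, ps) -> unwritten W t' p'
  | _ => True
  end.

(* The initial value of S is the only one with response bottom and pointer h(NOOP). *)
Definition in_history (W : list sval) (Z : sval) : Prop :=
  (sresp Z = RBot /\ sptr Z = HNoop) \/ In Z W.

Lemma registered_ticket (l : loc) t : registered l = Some t -> ticket l = Some t.
Proof. destruct l; simpl; congruence. Qed.

Lemma helped_S_read_S (l : loc) Z : helped_S l = Some Z -> read_S l = Some Z.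
Proof. destruct l; simpl; congruence. Qed.

Lemma skey_ptr (Z : sval) x : sptr Z = HPtr x -> skey Z = (stime Z, HPtr x).
Proof. unfold skey; congruence. Qed.

Lemma history_ptr W Z x : in_history W Z -> sptr Z = HPtr x -> In Z W.
Proof. intros [[_ Hp] | HZ] Hx; congruence. Qed.

Lemma in_history_app W W' Z : in_history W Z -> in_history (W ++ W') Z.
Proof. intros [H | H]; [left | right; apply in_or_app]; auto. Qed.

Lemma target_fresh_of_changed_S (c : conf) W l :
  (forall Z, read_S l = Some Z -> cS c <> Z) -> target_fresh c W l.
Proof. destruct l; simpl; auto; intros Hne HcS; exfalso; exact (Hne _ eq_refl HcS). Qed.

Record proc_ok (c : conf) (W : list sval) (P : nat -> nat -> Prop) (l : loc) : Prop := {
  ticket_lt_clock : forall t, ticket l = Some t -> t < cC c;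
  read_A_announced : forall t x, read_A l = Some (t, HPtr x) -> P t x;
  read_S_in_history : forall Z, read_S l = Some Z -> in_history W Z;
  helped_S_answered : forall Z, helped_S l = Some Z -> cS c = Z ->
    deref c (sptr Z) <> (stime Z, RNull);
  target_unwritten : target_fresh c W l }.

(* Ghost state: W lists the values written by successful line-12 GCASes, and P
   holds the pairs (t, x) such that (t, -, &H_x) was ever written to A. *)
Record Inv (c : conf) (W : list sval) (P : nat -> nat -> Prop) : Prop := {
  procs_ok : forall q, proc_ok c W P (cLoc c q);
  H_null_or_written : forall x t, registered (cLoc c x) = Some t ->
    cH c x = (t, RNull) \/
    exists s r, cH c x = (t, RVal r) /\ In (t, s, RVal r, HPtr x) W;
  H_answered_at_return : forall x o t, cLoc c x = L14 o t -> cH c x <> (t, RNull);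
  announced_le_registered : forall t x t0, P t x ->
    registered (cLoc c x) = Some t0 -> t <= t0;
  announced_lt_pending : forall t x t0, P t x -> registered (cLoc c x) = None ->
    ticket (cLoc c x) = Some t0 -> t < t0;
  announced_idle : forall t x, P t x -> ticket (cLoc c x) = None ->
    cH c x <> (t, RNull) /\ t < cC c;
  A_announced : forall t o x, cA c = (t, o, HPtr x) -> P t x;
  S_in_history : in_history W (cS c);
  written_resp : forall w, In w W -> exists r, sresp w = RVal r;
  written_announced : forall w t x, In w W -> skey w = (t, HPtr x) -> P t x;
  written_answered_or_current : forall w t x, In w W -> skey w = (t, HPtr x) ->
    cH c x <> (t, RNull) \/ skey (cS c) = (t, HPtr x);
  written_key_inj : forall a b, In a W -> In b W -> skey a = skey b -> a = b }.

Lemma Inv_init (s0 : St) (H0 : nat -> nat * Resp Res) :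
  Inv (init s0 H0) [] (fun _ _ => False).
Proof.
  constructor; simpl; intros; try contradiction; try discriminate.
  - constructor; simpl; intros; try discriminate; exact I.
  - left; split; reflexivity.
Qed.

Lemma proc_ok_transfer (c c' : conf) W P l :
  cC c <= cC c' -> cS c' = cS c -> cH c' = cH c ->
  proc_ok c W P l -> proc_ok c' W P l.
Proof.
  intros EC ES EH [Htk HA HS Hhelp Hfresh]; constructor; auto.
  - intros t Ht; specialize (Htk t Ht); lia.
  - intros Z HZ HcS; unfold deref; rewrite EH; apply Hhelp; congruence.
  - destruct l; simpl in *; rewrite ?ES; auto.
Qed.

Lemma proc_ok_setH (c : conf) W P l x h :
  proc_ok c W P l ->
  (forall Z, helped_S l = Some Z -> cS c = Z -> sptr Z = HPtr x -> h <> (stime Z, RNull)) ->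
  proc_ok (setH c (upd (cH c) x h)) W P l.
Proof.
  intros [Htk HA HS Hhelp Hfresh] Hx; constructor; auto.
  intros Z HZ HcS; simpl in HcS.
  pose proof (Hhelp Z HZ HcS) as Hd; unfold deref in *.
  destruct (sptr Z) as [|y] eqn:Hy; simpl; case_upd; auto.
Qed.

Lemma proc_ok_mono (c : conf) W (P P' : nat -> nat -> Prop) l :
  (forall t x, P t x -> P' t x) -> proc_ok c W P l -> proc_ok c W P' l.
Proof. intros HPP' [Htk HA HS Hhelp Hfresh]; constructor; eauto. Qed.

Lemma proc_ok_forget (c : conf) W P l l' :
  proc_ok c W P l -> ticket l' = ticket l ->
  (forall a, read_A l' = Some a -> read_A l = Some a) ->
  (forall Z, read_S l' = Some Z -> read_S l = Some Z) ->
  (forall Z, helped_S l' = Some Z -> helped_S l = Some Z) ->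
  target_fresh c W l' -> proc_ok c W P l'.
Proof.
  intros [Htk HA HS Hhelp _] Etk EA ES Ehelp Hfresh; constructor; auto.
  intros t; rewrite Etk; auto.
Qed.

Lemma proc_ok_helped (c : conf) W P o t ts ss rs ps :
  proc_ok c W P (L6 o t ts ss rs ps) ->
  (cS c = (ts, ss, rs, ps) -> deref c ps <> (ts, RNull)) ->
  proc_ok c W P (L7 o t ts ss rs ps).
Proof.
  intros [Htk HA HS _ _] Hd; constructor; simpl in *; auto; try discriminate.
  intros Z [= <-]; exact Hd.
Qed.

Lemma proc_ok_read_S (c : conf) W P p o t ts ss rs ps :
  Inv c W P -> cLoc c p = L5 o t -> cS c = (ts, ss, rs, ps) ->
  proc_ok c W P (L6 o t ts ss rs ps).
Proof.
  intros I Hl HS; destruct (procs_ok I p) as [Htk _ _ _ _]; rewrite Hl in Htk.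
  constructor; simpl; auto; try discriminate.
  intros Z [= <-]; rewrite <- HS; exact (S_in_history I).
Qed.

Lemma proc_ok_read_A (c : conf) W P p o t ts ss rs ps t' o' p' :
  Inv c W P -> cLoc c p = L8 o t ts ss rs ps -> cA c = (t', o', p') ->
  proc_ok c W P (L9 o t ts ss rs ps t' o' p').
Proof.
  intros I Hl HA; destruct (procs_ok I p) as [Htk _ HS Hhelp _]; rewrite Hl in Htk, HS, Hhelp.
  constructor; simpl in *; auto.
  intros t0 x [= -> ->]; exact (A_announced I HA).
Qed.

(* The reason line 12 never applies an operation twice. *)
Lemma unwritten_of_null_read (c : conf) W P t' p' :
  Inv c W P -> deref c (sptr (cS c)) <> (stime (cS c), RNull) ->
  deref c p' = (t', RNull) -> unwritten W t' p'.
Proof.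
  intros I Hhelped Hnull w Hw Hk.
  destruct p' as [|x]; [discriminate|]; simpl in Hnull.
  destruct (written_answered_or_current I Hw Hk) as [Hn | Hs]; [contradiction|].
  apply Hhelped; unfold skey in Hs; injection Hs as -> ->; exact Hnull.
Qed.

Lemma proc_ok_read_H (c : conf) W P p o t ts ss rs ps t' o' p' th rh :
  Inv c W P -> cLoc c p = L9 o t ts ss rs ps t' o' p' -> deref c p' = (th, rh) ->
  proc_ok c W P (L10 o t ts ss rs ps t' o' p' th rh).
Proof.
  intros I Hl Hh; destruct (procs_ok I p) as [Htk HA HS Hhelp _]; rewrite Hl in Htk, HA, HS, Hhelp.
  constructor; simpl in *; auto.
  intros HcS Hnull; apply (unwritten_of_null_read I); [|rewrite Hh; exact Hnull].
  rewrite HcS; exact (Hhelp _ eq_refl HcS).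
Qed.

Lemma Inv_local (c : conf) W P p l' :
  Inv c W P ->
  registered l' = registered (cLoc c p) -> ticket l' = ticket (cLoc c p) ->
  (forall o t, l' = L14 o t -> cH c p <> (t, RNull)) ->
  proc_ok c W P l' ->
  Inv (setL c p l') W P.
Proof.
  intros I Hreg Htk H14 Hok.
  constructor.
  { intro q; apply proc_ok_transfer with (c := c); auto; simpl; unfold upd.
    destruct (Nat.eq_dec q p); [exact Hok | exact (procs_ok I q)]. }
  all: destruct I; simpl; intros; case_upd; try rewrite Hreg in *; try rewrite Htk in *; eauto.
Qed.

Lemma Inv_fai (c : conf) W P p o :
  Inv c W P -> cLoc c p = L2 o ->
  Inv (setL (setC c (S (cC c))) p (L3 o (cC c))) W P.
Proof.
  intros I Hl.
  constructor.
  { intro q; simpl; case_upd.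
    - constructor; simpl; intros; try discriminate; auto.
      match goal with H : Some _ = Some _ |- _ => injection H as <- end; lia.
    - apply proc_ok_transfer with (c := c); simpl; auto. exact (procs_ok I q). }
  all: destruct I as [_ Hresp Hret Hreg Hpend Hidle HA HS Hwr Hwa Hwd Hinj];
    simpl; intros; case_upd; simpl in *; try discriminate; eauto.
  - match goal with H : Some _ = Some _ |- _ => injection H as <- end.
    refine (proj2 (Hidle _ _ _ _)); [eassumption | rewrite Hl; reflexivity].
  - match goal with H : P _ _ |- _ => destruct (Hidle _ _ H) as [Hnull Hlt] end;
      auto with arith.
Qed.

Lemma Inv_register (c : conf) W P p o t :
  Inv c W P -> cLoc c p = L3 o t ->
  Inv (setL (setH c (upd (cH c) p (t, RNull))) p (L4 o t)) W P.
Proof.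
  intros I Hl.
  assert (Hold : forall t', P t' p -> t' < t)
    by (intros t' Ht'; apply (announced_lt_pending I Ht'); rewrite ?Hl; auto).
  constructor.
  { intro q; apply proc_ok_transfer with (c := setH c (upd (cH c) p (t, RNull))); auto.
    simpl; case_upd.
    - destruct (procs_ok I p) as [Htk _ _ _ _]; rewrite Hl in Htk.
      constructor; simpl; intros; try discriminate; auto.
    - apply proc_ok_setH; [exact (procs_ok I q)|].
      intros Z HZ _ Hp [= Ht].
      destruct (procs_ok I q) as [_ _ HS _ _].
      specialize (Hold _ (written_announced I
        (history_ptr (HS Z (helped_S_read_S HZ)) Hp) (skey_ptr Hp))).
      lia. }
  all: destruct I as [_ Hresp Hret Hreg Hpend Hidle HA HS Hwr Hwa Hwd Hinj];
    simpl; intros; case_upd; simpl in *; try discriminate; eauto.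
  - left; congruence.
  - match goal with H : P _ p |- _ => specialize (Hold _ H) end.
    match goal with H : Some _ = Some _ |- _ => injection H as <- end; lia.
  - left; intros [= <-].
    match goal with Hw : In _ W, Hk : skey _ = _ |- _ =>
      specialize (Hold _ (Hwa _ _ _ Hw Hk)) end; lia.
Qed.

Lemma Inv_install_response (c : conf) W P y t s r :
  Inv c W P -> In (t, s, RVal r, HPtr y) W -> cH c y = (t, RNull) ->
  Inv (setH c (upd (cH c) y (t, RVal r))) W P.
Proof.
  intros I Hw Hy.
  constructor.
  { intro q; apply proc_ok_setH; [exact (procs_ok I q) | discriminate]. }
  all: destruct I as [_ Hresp Hret Hreg Hpend Hidle HA HS Hwr Hwa Hwd Hinj];
    simpl; intros; case_upd; try discriminate; eauto.
  - match goal with H : registered _ = Some _ |- _ =>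
      destruct (Hresp _ _ H) as [E|[? [? [E _]]]] end;
      rewrite Hy in E; [injection E as ->; right; eauto | discriminate].
  - split; [discriminate|]. eapply proj2, Hidle; eassumption.
  - left; discriminate.
Qed.

Lemma Inv_help (c : conf) W P p o t ts ss rs y :
  Inv c W P -> cLoc c p = L6 o t ts ss rs (HPtr y) -> cH c y = (ts, RNull) ->
  Inv (setL (setH c (upd (cH c) y (ts, rs))) p (L7 o t ts ss rs (HPtr y))) W P.
Proof.
  intros I Hl Hh.
  destruct (procs_ok I p) as [_ _ HS _ _]; rewrite Hl in HS.
  specialize (history_ptr (HS _ eq_refl) eq_refl) as Hin.
  destruct (written_resp I Hin) as [r Hr]; simpl in Hr; subst rs.
  pose proof (Inv_install_response I Hin Hh) as I1.
  apply (Inv_local I1); simpl; rewrite ?Hl; try reflexivity; [discriminate|].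
  apply proc_ok_helped; [|intros _; simpl; rewrite upd_same; discriminate].
  pose proof (procs_ok I1 p) as Hok; simpl in Hok; rewrite Hl in Hok; exact Hok.
Qed.

Lemma Inv_announce (c : conf) W P p t o :
  Inv c W P -> registered (cLoc c p) = Some t ->
  Inv (setA c (t, Some o, HPtr p)) W (fun t' x => P t' x \/ t' = t /\ x = p).
Proof.
  intros I Hp.
  constructor.
  { intro q; apply proc_ok_transfer with (c := c); auto.
    apply proc_ok_mono with (P := P); auto. exact (procs_ok I q). }
  all: destruct I as [_ Hresp Hret Hreg Hpend Hidle HA HS Hwr Hwa Hwd Hinj];
    simpl; intros; repeat match goal with H : _ \/ _ /\ _ |- _ => destruct H as [|[-> ->]] end;
    try congruence; eauto.
  - match goal with H : registered _ = Some _ |- _ => rewrite Hp in H; injection H as <- end.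
    reflexivity.
  - apply registered_ticket in Hp; congruence.
  - match goal with H : (_, _, _) = (_, _, _) |- _ => injection H as -> _ -> end; auto.
Qed.

Lemma Inv_commit (c : conf) W P p o t ts ss rs ps t' o' p' s' r' :
  Inv c W P -> cLoc c p = L12 o t ts ss rs ps t' o' p' s' r' -> cS c = (ts, ss, rs, ps) ->
  Inv (setS c (t', s', RVal r', p')) (W ++ [(t', s', RVal r', p')]) P.
Proof.
  intros I Hl HcS.
  destruct (procs_ok I p) as [_ HpA _ Hphelp Hpfresh]; rewrite Hl in HpA, Hphelp, Hpfresh.
  specialize (Hpfresh HcS); specialize (Hphelp _ eq_refl HcS); simpl in Hpfresh, Hphelp.
  assert (Hnew : forall Z, in_history W Z -> Z <> (t', s', RVal r', p')).
  { intros Z [[Hr _] | HZ] ->; [discriminate | exact (Hpfresh _ HZ eq_refl)]. }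
  constructor.
  { intro q; destruct (procs_ok I q) as [Htk HA HS Hhelp Hfresh]; constructor; simpl; auto.
    - intros Z HZ; apply in_history_app; auto.
    - intros Z HZ HZ'; exfalso; apply (Hnew Z); auto using helped_S_read_S.
    - apply target_fresh_of_changed_S; simpl; intros Z HZ HZ'; apply (Hnew Z); auto. }
  all: destruct I as [_ Hresp Hret Hreg Hpend Hidle HA HS Hwr Hwa Hwd Hinj]; simpl; auto.
  - intros x t0 Hx; destruct (Hresp x t0 Hx) as [|[s [r [E Hin]]]];
      [left | right; exists s, r]; auto using in_or_app.
  - right; apply in_or_app; right; left; reflexivity.
  - intros w [Hw | [<- | []]]%in_app_or; [auto | eexists; reflexivity].
  - intros w t0 x [Hw | [<- | []]]%in_app_or Hk; [eauto|].
    simpl in Hk; injection Hk as -> ->; apply HpA; reflexivity.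
  - intros w t0 x [Hw | [<- | []]]%in_app_or Hk; [|right; exact Hk].
    destruct (Hwd w t0 x Hw Hk) as [Hn | Hkey]; [left; exact Hn|].
    rewrite HcS in Hkey; simpl in Hkey; injection Hkey as -> ->; left; exact Hphelp.
  - intros a b [Ha | [<- | []]]%in_app_or [Hb | [<- | []]]%in_app_or Hk; auto;
      exfalso; [exact (Hpfresh a Ha Hk) | exact (Hpfresh b Hb (eq_sym Hk))].
Qed.

Lemma Inv_return (c : conf) W P p o t :
  Inv c W P -> cLoc c p = L14 o t -> Inv (setL c p Idle) W P.
Proof.
  intros I Hl.
  destruct (procs_ok I p) as [Htk _ _ _ _]; rewrite Hl in Htk.
  specialize (Htk t eq_refl); simpl in Htk.
  assert (Hdone : exists r, cH c p = (t, RVal r)).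
  { destruct (H_null_or_written I (x := p) (t := t) ltac:(rewrite Hl; reflexivity))
      as [Hn | [s [r [E _]]]]; [destruct (H_answered_at_return I Hl Hn) | eauto]. }
  constructor.
  { intro q; apply proc_ok_transfer with (c := c); auto; simpl; case_upd.
    - constructor; simpl; intros; discriminate || exact Logic.I.
    - exact (procs_ok I q). }
  all: destruct I as [_ Hresp Hret Hreg Hpend Hidle HA HS Hwr Hwa Hwd Hinj];
    simpl; intros; case_upd; simpl in *; try discriminate; eauto.
  destruct Hdone as [r ->]; split; [discriminate|].
  match goal with H : P _ p |- _ => specialize (Hreg _ _ t H ltac:(rewrite Hl; reflexivity)) end.
  lia.
Qed.

Fixpoint written (es : list (Ev Op Res St)) : list sval :=
  match es with
  | [] => []
  | EvL12 _ v true :: es' => v :: written es'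
  | _ :: es' => written es'
  end.

Lemma written_app (es1 es2 : list (Ev Op Res St)) :
  written (es1 ++ es2) = written es1 ++ written es2.
Proof.
  induction es1 as [|e es1 IH]; simpl; auto.
  destruct e as [| | ? ? [|] | |]; simpl; rewrite ?IH; auto.
Qed.

Lemma In_written q w (es : list (Ev Op Res St)) :
  In (EvL12 q w true) es -> In w (written es).
Proof.
  induction es as [|e es IH]; simpl; [tauto|].
  intros [-> | Hin]; [simpl; left; reflexivity|].
  destruct e as [| | ? ? [|] | |]; simpl; auto.
Qed.

Context (applyT : Op -> St -> St -> Res -> Prop).

Ltac local_step I p Hl :=
  apply (Inv_local I); simpl; rewrite ?Hl; try reflexivity; try (intros ? ? [=]; fail).

Ltac forget I p Hl :=
  apply (proc_ok_forget (procs_ok I p)); simpl; rewrite ?Hl; simpl; auto;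
  try (intros ? [=]; fail).

Lemma step_inv (c : conf) W P e c' :
  Inv c W P -> step applyT c e c' -> exists P', Inv c' (W ++ written [e]) P'.
Proof.
  intros I Hs.
  destruct Hs as
    [c p o Hl | c p o Hl | c p o t Hl | c p o t Hl _ | c p o t Hl Hh
    | c p o t ts ss rs ps Hl HS | c p o t ts ss rs y Hl Hh | c p o t ts ss rs ps Hl Hh
    | c p o t ts ss rs ps Hl _ | c p o t ts ss rs ps Hl _
    | c p o t ts ss rs ps t' o' p' Hl HA | c p o t ts ss rs ps t' o' p' th rh Hl Hh
    | c p o t ts ss rs ps t' o' p' th rh Hl Hnull
    | c p o t ts ss rs ps t' o' p' th rh Hl _ | c p o t ts ss rs ps t' oo p' s' r' Hl _
    | c p o t ts ss rs ps t' o' p' s' r' Hl HS | c p o t ts ss rs ps t' o' p' s' r' Hl _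
    | c p o t t' o' p' Hl _ | c p o t t' o' p' Hl _ | c p o t Hl];
    simpl; rewrite ?app_nil_r.
  - exists P; local_step I p Hl. forget I p Hl.
  - exists P; exact (Inv_fai I Hl).
  - exists P; exact (Inv_register I Hl).
  - exists P; local_step I p Hl. forget I p Hl.
  - exists P; local_step I p Hl; [intros ? ? [= <- <-]; exact Hh | forget I p Hl].
  - exists P; local_step I p Hl. exact (proc_ok_read_S I Hl HS).
  - exists P; exact (Inv_help I Hl Hh).
  - exists P; local_step I p Hl.
    apply proc_ok_helped; [|intros _; exact Hh].
    pose proof (procs_ok I p) as Hok; rewrite Hl in Hok; exact Hok.
  - eexists; pose proof (Inv_announce o I (t := t) ltac:(rewrite Hl; reflexivity)) as I1.
    local_step I1 p Hl. forget I1 p Hl.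
  - exists P; local_step I p Hl. forget I p Hl.
  - exists P; local_step I p Hl. exact (proc_ok_read_A I Hl HA).
  - exists P; local_step I p Hl. exact (proc_ok_read_H I Hl Hh).
  - exists P; local_step I p Hl.
    pose proof (target_unwritten (procs_ok I p)) as Hf; rewrite Hl in Hf.
    forget I p Hl.
  - exists P; local_step I p Hl. forget I p Hl.
  - exists P; local_step I p Hl.
    pose proof (target_unwritten (procs_ok I p)) as Hf; rewrite Hl in Hf.
    forget I p Hl.
  - exists P; pose proof (Inv_commit I Hl HS) as I1.
    local_step I1 p Hl. forget I1 p Hl.
  - exists P; local_step I p Hl. forget I p Hl.
  - eexists; pose proof (Inv_announce o I (t := t) ltac:(rewrite Hl; reflexivity)) as I1.
    local_step I1 p Hl. forget I1 p Hl.
  - exists P; local_step I p Hl. forget I p Hl.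
  - exists P; exact (Inv_return I Hl).
Qed.

Lemma run_inv (c c' : conf) es W P :
  run applyT c es c' -> Inv c W P -> exists P', Inv c' (W ++ written es) P'.
Proof.
  intros Hrun; revert W P; induction Hrun as [c | c e c1 es c' Hs Hrun IH]; intros W P I.
  - exists P; rewrite app_nil_r; exact I.
  - destruct (step_inv I Hs) as [P1 I1].
    destruct (IH _ _ I1) as [P' I'].
    exists P'; rewrite <- app_assoc, <- written_app in I'; exact I'.
Qed.

Lemma run_app (c c' : conf) es1 es2 :
  run applyT c (es1 ++ es2) c' -> exists c1, run applyT c es1 c1 /\ run applyT c1 es2 c'.
Proof.
  revert c; induction es1 as [|e es1 IH]; simpl; intros c Hrun.
  - exists c; split; [constructor | exact Hrun].
  - inversion Hrun as [|? ? c2 ? ? Hs Hrest]; subst.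
    destruct (IH _ Hrest) as [c1 [H1 H2]].
    exists c1; split; [econstructor; eauto | exact H2].
Qed.

Lemma run_trans (c1 c2 c3 : conf) es1 es2 :
  run applyT c1 es1 c2 -> run applyT c2 es2 c3 -> run applyT c1 (es1 ++ es2) c3.
Proof.
  induction 1 as [c | c e c' es c'' Hs Hrun IH]; simpl; auto.
  intros Hrun2; econstructor; eauto.
Qed.

Lemma step_ticket (c c' : conf) e x t :
  step applyT c e c' -> (forall v, e <> EvRet x v) ->
  ticket (cLoc c x) = Some t -> ticket (cLoc c' x) = Some t.
Proof.
  intros Hs Hret Ht; destruct Hs; simpl; unfold upd;
    match goal with |- context [Nat.eq_dec x ?p] => destruct (Nat.eq_dec x p) as [<- | ] end;
    auto;
    match goal with Hl : cLoc _ x = _ |- _ => rewrite Hl in Ht end;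
    simpl in *; try discriminate; auto.
  exfalso; eapply Hret; reflexivity.
Qed.

Lemma run_ticket (c c' : conf) es x t :
  run applyT c es c' -> (forall v, ~ In (EvRet x v) es) ->
  ticket (cLoc c x) = Some t -> ticket (cLoc c' x) = Some t.
Proof.
  induction 1 as [c | c e c1 es c' Hs Hrun IH]; intros Hret Ht; auto.
  apply IH; [intros v Hv; apply (Hret v); right; exact Hv|].
  apply (step_ticket Hs); auto.
  intros v ->; apply (Hret v); left; reflexivity.
Qed.

Lemma returned_response (c c' : conf) W P p v :
  Inv c W P -> step applyT c (EvRet p v) c' ->
  exists o t s r, cLoc c p = L14 o t /\ v = RVal r /\ In (t, s, RVal r, HPtr p) W.
Proof.
  intros I Hs; inversion Hs as [| | | | | | | | | | | | | | | | | | | ? ? o t Hl]; subst.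
  destruct (H_null_or_written I (x := p) (t := t) ltac:(rewrite Hl; reflexivity))
    as [Hn | [s [r [E Hin]]]]; [destruct (H_answered_at_return I Hl Hn)|].
  exists o, t, s, r; rewrite E; auto.
Qed.

Lemma completed_op_response (s0 : St) H0 m1 m2 l2 cf p t v :
  run applyT (init s0 H0) (m1 ++ EvFAI p t :: m2 ++ EvRet p v :: l2) cf ->
  (forall v', ~ In (EvRet p v') m2) ->
  exists s r, v = RVal r /\
    In (t, s, RVal r, HPtr p) (written (m1 ++ EvFAI p t :: m2 ++ EvRet p v :: l2)).
Proof.
  intros Hrun Hret.
  destruct (run_app Hrun) as [c1 [Hrun1 Hrest]].
  inversion Hrest as [|? ? c2 ? ? Hfai Hrest2]; subst.
  change (m2 ++ EvRet p v :: l2) with (m2 ++ [EvRet p v] ++ l2) in Hrest2.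
  destruct (run_app Hrest2) as [c3 [Hrun2 Hrest3]].
  destruct (run_app Hrest3) as [c4 [Hret1 _]].
  inversion Hret1 as [|? ? ? ? ? Hstep Hnil]; subst; inversion Hnil; subst.
  assert (Ht : ticket (cLoc c3 p) = Some t).
  { apply (run_ticket Hrun2 Hret).
    inversion Hfai; subst; simpl; rewrite upd_same; reflexivity. }
  destruct (run_inv (run_trans Hrun1 (run_cons Hfai Hrun2)) (Inv_init s0 H0)) as [P I3].
  destruct (returned_response I3 Hstep) as (o & t' & s & r & Hl & Hv & Hin).
  rewrite Hl in Ht; injection Ht as ->.
  exists s, r; split; [exact Hv|].
  replace (m1 ++ EvFAI p t :: m2 ++ EvRet p v :: l2)
    with ((m1 ++ EvFAI p t :: m2) ++ EvRet p v :: l2) by (rewrite <- app_assoc; reflexivity).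
  rewrite written_app; apply in_or_app; left; exact Hin.
Qed.

End Invariant.

Theorem mainTheorem15 :
  forall (Op Res St : Type) (s0 : St)
    (delta : St -> Op -> St -> Res -> Prop)
    (applyT : Op -> St -> St -> Res -> Prop),
    (forall o s s' r, applyT o s s' r -> delta s o s' r) ->
    (forall o s, exists s' r, applyT o s s' r) ->
  forall (H0 : nat -> nat * Resp Res) (evs : list (Ev Op Res St)) cf,
    run applyT (init s0 H0) evs cf ->
  forall (p : nat) (o : Op) (i f j : nat) (t : nat) (v : Resp Res),
    nth_error evs i = Some (EvInv p o) ->
    i < f < j ->
    nth_error evs f = Some (EvFAI p t) ->
    nth_error evs j = Some (EvRet p v) ->
    (forall m v', i < m < j -> nth_error evs m <> Some (EvRet p v')) ->
  forall (k q : nat) (s : St) (r : Res),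
    nth_error evs k = Some (EvL12 q (t, s, RVal r, HPtr p) true) ->
    v = RVal r.
Proof.
  intros Op Res St s0 delta applyT _ _ H0 evs cf Hrun p o i f j t v _ [Hif Hfj] Hf Hj Hno
    k q s r Hk.
  destruct (nth_error_split evs j Hj) as (l1 & l2 & -> & Hlen1).
  rewrite nth_error_app1 in Hf by lia.
  destruct (nth_error_split l1 f Hf) as (m1 & m2 & -> & Hlen2).
  rewrite <- app_assoc in *; simpl in *.
  assert (Hret : forall v', ~ In (EvRet p v') m2).
  { intros v' Hin.
    destruct (In_nth_error_between m1 (EvRet p v :: l2) (EvFAI p t) Hin) as (n & Hn & Hnth).
    rewrite length_app in Hlen1; simpl in Hlen1.
    apply (Hno n v'); [lia | exact Hnth]. }
  destruct (completed_op_response Hrun Hret) as (s' & r' & -> & Hin).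
  destruct (run_inv Hrun (Inv_init s0 H0)) as [P I].
  pose proof (written_key_inj I Hin (In_written (nth_error_In _ _ Hk)) eq_refl) as E.
  congruence.
Qed.
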